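(* For every $n\ge1$ and every $\delta>0$, \[ \lim_{\substack{x\to\infty\\ \{\log_2 x\}\ge\delta}}\frac{\mathbb{P}\{S_n>x\}}{\mathbb{P}\{X>x\}}=n, \] and moreover \[ n=\liminf_{x\to\infty}x\,\mathbb{P}\{S_n>x\}<\limsup_{x\to\infty}x\,\mathbb{P}\{S_n>x\}=2n . \]
   Context: $X,X_1,X_2,\ldots$ are iid St.~Petersburg random variables: $\mathbb{P}\{X=2^k\}=2^{-k}$, $k\in\{1,2,\ldots\}$; $S_n=X_1+\dots+X_n$; $\{y\}$ denotes the fractional part of $y$. *)

From Stdlib Require Import Reals Lra Lia ZArith Arith.
Open Scope R_scope.

(* Point masses of S_n = X_1 + ... + X_n, X_i iid St. Petersburg
   (P{X = 2^k} = 2^{-k}, k >= 1).  S_n is integer valued, so its law is the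
   n-fold convolution of the law of X:
     stp_pmf 0 m     = [m = 0]                 (S_0 = 0)
     stp_pmf (n+1) m = sum_{k>=1, 2^k <= m} 2^{-k} * stp_pmf n (m - 2^k).
   (Only k <= m can satisfy 2^k <= m, so the sum is finite.) *)
Fixpoint stp_pmf (n m : nat) : R :=
  match n with
  | O => if Nat.eqb m 0 then 1 else 0
  | S n' =>
      sum_f_R0 (fun k =>
        if andb (Nat.leb 1 k) (Nat.leb (2 ^ k) m)
        then (/ 2) ^ k * stp_pmf n' (m - 2 ^ k)
        else 0) m
  end.

(* P{S_n <= x} : sum of the masses at integers m <= x
   (all such m are <= up x). *)
Definition stp_cdf (n : nat) (x : R) : R :=
  sum_f_R0 (fun m => if Rle_dec (INR m) x then stp_pmf n m else 0)
           (Z.to_nat (up x)).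

Definition stp_tail (n : nat) (x : R) : R := 1 - stp_cdf n x.

Definition log2 (x : R) : R := ln x / ln 2.

From Stdlib Require Import Reals Lra Lia Arith ZArith.
Open Scope R_scope.

(** Write [t N = P{X > N} = 2^-(floor (log2 N))] for an integer threshold [N].
  Everything rests on two non-asymptotic estimates for [P{S_n > N}]:
  - a lower bound [n t - n^2 t^2 <= P{S_n > N}] (a Bonferroni-type bound,
    proved by induction on [n] from the convolution recursion
    [P{S_(n+1) > N} = t N + sum_k P{X = 2^k, 2^k <= N} P{S_n > N - 2^k}]);
  - an upper bound [P{S_n > N} <= n t M + C/N^2] valid whenever
    [M <= (1-eta) N], with [C] depending on [n] and [eta] only.  It is also
    proved by induction on [n]: in the recursion, small jumps [2^k <= a N]
    are handled by the induction hypothesis, intermediate jumps by the crude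
    consequence [P{S_n > L} = O(1/L)] and a geometric series, and the jumps
    close to [N] are absorbed together with [t N] into [t M].
  Since [1 <= N t N] and [(N+1) t N <= 2], the bounds give [N P{S_n > N}]
  between [n] and [2n] asymptotically, with the extreme values approached
  along [N = 2^K (2^j + 1)] and [N = 2^(K+1) - 1]; when the fractional part
  of [log2 x] stays away from [0], [t M = t N] may be chosen and the ratio
  [P{S_n > x} / P{X > x}] tends to [n].  Real thresholds [x] reduce to the
  integer threshold [floor x]. *)

Lemma sum_single (f : nat -> R) N j :
  (forall k, k <> j -> f k = 0) -> (j <= N)%nat -> sum_f_R0 f N = f j.
Proof.
  intros Hf. induction N as [|N IH]; intros Hj; simpl.
  - now replace j with 0%nat by lia.
  - destruct (Nat.eq_dec j (S N)) as [->|Hne].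
    + rewrite sum_eq_R0; [lra|]. intros k Hk. apply Hf. lia.
    + rewrite IH, (Hf (S N)) by lia. lra.
Qed.

Lemma div_nonneg a b : 0 <= a -> 0 < b -> 0 <= a / b.
Proof. intros Ha Hb. apply Rmult_le_pos; [exact Ha|apply Rlt_le, Rinv_0_lt_compat, Hb]. Qed.

Lemma half_pow_pos k : 0 < (/2) ^ k.
Proof. apply pow_lt; lra. Qed.

Lemma half_pow_mul k : (/2) ^ k * 2 ^ k = 1.
Proof. rewrite <- Rpow_mult_distr, Rinv_l by lra. apply pow1. Qed.

Lemma INR_pow2 k : INR (2 ^ k) = 2 ^ k.
Proof. now rewrite pow_INR. Qed.

Lemma pow2_le a b : (a <= b)%nat -> 2 ^ a <= 2 ^ b.
Proof. intros; apply Rle_pow; lra || assumption. Qed.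

Lemma half_pow_anti a b : (a <= b)%nat -> (/2) ^ b <= (/2) ^ a.
Proof.
  intros Hab. replace b with (a + (b - a))%nat by lia. rewrite pow_add.
  assert ((/2) ^ (b - a) <= 1) by (rewrite <- (pow1 (b - a)); apply pow_incr; lra).
  pose proof (half_pow_pos a). nra.
Qed.

Lemma exists_pow2_above y : exists j, (1 <= j)%nat /\ y < 2 ^ j.
Proof.
  destruct (archimed (Rabs y)) as [Hup _].
  exists (S (Z.to_nat (up (Rabs y)))). split; [lia|].
  assert (Hlin : forall j, INR j < 2 ^ j).
  { induction j as [|j IH]; [simpl; lra|].
    rewrite S_INR. simpl. pose proof (pow_R1_Rle 2 j ltac:(lra)). lra. }
  pose proof (Hlin (S (Z.to_nat (up (Rabs y))))) as Hj. rewrite S_INR in Hj.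
  assert (IZR (up (Rabs y)) <= INR (Z.to_nat (up (Rabs y)))).
  { rewrite INR_IZR_INZ. apply IZR_le. lia. }
  pose proof (Rle_abs y). lra.
Qed.

Lemma geometric_tail y m : 0 < y ->
  sum_f_R0 (fun k => if Rlt_dec y (2 ^ k) then (/2) ^ k else 0) m <= 2 / y.
Proof.
  intros Hy. set (g := fun k => if Rlt_dec y (2 ^ k) then (/2) ^ k else 0).
  (* Invariant: the partial sum vanishes while [2^m <= y]; afterwards the
     partial sum plus the remaining mass [2^-m] stays below [2 / y]. *)
  assert (Inv : (2 ^ m <= y -> sum_f_R0 g m = 0) /\
                (y < 2 ^ m -> sum_f_R0 g m + (/2) ^ m <= 2 / y)).
  { induction m as [|m [I1 I2]]; unfold g in *; simpl.
    - split; intros Hy1; destruct (Rlt_dec y 1); try lra.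
      apply Rmult_le_reg_l with y; auto. field_simplify; lra.
    - pose proof (pow_lt 2 m ltac:(lra)). pose proof (half_pow_mul m).
      split; intros Hym.
      + rewrite I1 by lra. destruct (Rlt_dec y (2 * 2 ^ m)); lra.
      + destruct (Rlt_dec y (2 * 2 ^ m)); [|lra].
        destruct (Rle_lt_dec (2 ^ m) y) as [Hm|Hm].
        * rewrite I1 by auto.
          apply Rmult_le_reg_l with y; auto. field_simplify; nra.
        * specialize (I2 Hm). lra. }
  destruct (Rle_lt_dec (2 ^ m) y) as [Hsmall|Hlarge].
  - rewrite (proj1 Inv Hsmall). apply div_nonneg; lra.
  - pose proof (proj2 Inv Hlarge). pose proof (half_pow_pos m). lra.
Qed.

(** The integer part of a nonnegative real, as a natural number. *)
Definition floor_nat (y : R) : nat := (Z.to_nat (up y) - 1)%nat.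

Lemma floor_nat_spec y : 0 <= y -> INR (floor_nat y) <= y < INR (floor_nat y) + 1.
Proof.
  intros Hy. destruct (archimed y) as [Hup Hup1].
  assert (Hu : (0 < up y)%Z) by (apply lt_0_IZR; lra).
  assert (E : INR (Z.to_nat (up y)) = IZR (up y)).
  { rewrite INR_IZR_INZ, Z2Nat.id; auto; lia. }
  unfold floor_nat. rewrite minus_INR by lia. rewrite E. simpl. lra.
Qed.

Lemma floor_nat_INR N : floor_nat (INR N) = N.
Proof.
  destruct (floor_nat_spec (INR N) (pos_INR N)) as [Hlo Hhi].
  apply INR_le in Hlo.
  assert (N < S (floor_nat (INR N)))%nat by (apply INR_lt; rewrite S_INR; lra). lia.
Qed.

(** [coef k N = P{X = 2^k}] if [1 <= k] and [2^k <= N], and [0] otherwise: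
    the weights of the convolution recursion defining [stp_pmf]. *)
Definition coef (k N : nat) : R :=
  if andb (Nat.leb 1 k) (Nat.leb (2 ^ k) N) then (/2) ^ k else 0.

Lemma coef_cases k N :
  ((1 <= k)%nat /\ (2 ^ k <= N)%nat /\ coef k N = (/2) ^ k) \/
  (~ ((1 <= k)%nat /\ (2 ^ k <= N)%nat) /\ coef k N = 0).
Proof.
  unfold coef. destruct (Nat.leb_spec 1 k), (Nat.leb_spec (2 ^ k) N); simpl.
  1: left; auto.
  all: right; split; [lia|auto].
Qed.

Lemma coef_bounds k N : 0 <= coef k N <= (/2) ^ k.
Proof.
  pose proof (half_pow_pos k).
  destruct (coef_cases k N) as [[_ [_ ->]]|[_ ->]]; lra.
Qed.

Lemma coef_support k N : coef k N <> 0 -> (1 <= k)%nat /\ (k <= Nat.log2 N)%nat.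
Proof.
  intros Hc. destruct (coef_cases k N) as [[Hk [HN _]]|[_ Hzero]]; [|contradiction].
  split; [exact Hk|]. pose proof (Nat.pow_nonzero 2 k ltac:(lia)).
  apply Nat.log2_le_pow2; lia.
Qed.

Lemma log2_le_self N : (Nat.log2 N <= N)%nat.
Proof.
  destruct (Nat.eq_dec N 0) as [->|H]; [rewrite Nat.log2_nonpos; lia|].
  pose proof (Nat.log2_spec N ltac:(lia)).
  pose proof (Nat.pow_gt_lin_r 2 (Nat.log2 N) ltac:(lia)). lia.
Qed.

Lemma pmf_succ n m :
  stp_pmf (S n) m = sum_f_R0 (fun k => coef k m * stp_pmf n (m - 2 ^ k)) m.
Proof.
  simpl. apply sum_eq. intros k _. unfold coef. destruct (andb _ _); lra.
Qed.

Lemma pmf_nonneg n m : 0 <= stp_pmf n m.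
Proof.
  revert m; induction n as [|n IH]; intros m.
  - simpl. destruct (Nat.eqb m 0); lra.
  - rewrite pmf_succ. apply cond_pos_sum. intros k.
    apply Rmult_le_pos; [apply coef_bounds|apply IH].
Qed.

Definition cdf (n N : nat) : R := sum_f_R0 (stp_pmf n) N.
Definition tail (n N : nat) : R := 1 - cdf n N.

(** [tailX N = 2^-(floor (log2 N))]; it is [P{X > N}] (lemma [tail_one]). *)
Definition tailX (N : nat) : R := (/2) ^ Nat.log2 N.

Lemma cdf_mono n L N : (L <= N)%nat -> cdf n L <= cdf n N.
Proof.
  induction 1 as [|N _ IH]; [lra|].
  unfold cdf in *. rewrite tech5. pose proof (pmf_nonneg n (S N)). lra.
Qed.

Lemma tail_anti n L N : (L <= N)%nat -> tail n N <= tail n L.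
Proof. unfold tail. intros HLN. pose proof (cdf_mono n L N HLN). lra. Qed.

Lemma tail_le_1 n N : tail n N <= 1.
Proof.
  unfold tail, cdf. pose proof (cond_pos_sum _ N (pmf_nonneg n)). lra.
Qed.

Lemma cdf_zero N : cdf 0 N = 1.
Proof.
  induction N as [|N IH]; [reflexivity|].
  unfold cdf in *. rewrite tech5, IH. simpl. lra.
Qed.

Lemma tail_zero N : tail 0 N = 0.
Proof. unfold tail. rewrite cdf_zero. ring. Qed.

Lemma cdf_succ n N :
  cdf (S n) N = sum_f_R0 (fun k => coef k N * cdf n (N - 2 ^ k)) N.
Proof.
  induction N as [|N IH].
  - unfold cdf, coef. simpl. lra.
  - unfold cdf at 1. rewrite tech5. fold (cdf (S n) N).
    rewrite IH, pmf_succ.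
    replace (sum_f_R0 (fun k => coef k N * cdf n (N - 2 ^ k)) N) with
      (sum_f_R0 (fun k => coef k N * cdf n (N - 2 ^ k)) (S N)).
    2:{ rewrite tech5. replace (coef (S N) N) with 0; [ring|].
        destruct (coef_cases (S N) N) as [[_ [H _]]|[_ ->]]; auto.
        pose proof (Nat.pow_gt_lin_r 2 (S N) ltac:(lia)). lia. }
    rewrite <- plus_sum. symmetry. apply sum_eq. intros k _.
    destruct (coef_cases k (S N)) as [[H1 [H2 ->]]|[H1 ->]];
    destruct (coef_cases k N) as [[H3 [H4 ->]]|[H3 ->]]; try ring; try lia.
    + replace (S N - 2 ^ k)%nat with (S (N - 2 ^ k)) by lia.
      unfold cdf. rewrite tech5. ring.
    + replace (S N - 2 ^ k)%nat with 0%nat by lia. unfold cdf. simpl. ring.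
Qed.

Lemma coef_sum_partial N m :
  sum_f_R0 (fun k => coef k N) m = 1 - (/2) ^ (Nat.min m (Nat.log2 N)).
Proof.
  induction m as [|m IH].
  - unfold coef. simpl. lra.
  - rewrite tech5, IH.
    destruct (Nat.eq_dec N 0) as [->|HN].
    + destruct (coef_cases (S m) 0) as [[_ [H _]]|[_ ->]].
      * pose proof (Nat.pow_nonzero 2 (S m)). lia.
      * simpl Nat.log2. rewrite !Nat.min_0_r. lra.
    + destruct (coef_cases (S m) N) as [[H1 [H2 ->]]|[H1 ->]].
      * apply Nat.log2_le_pow2 in H2; [|lia].
        rewrite !Nat.min_l by lia. simpl. lra.
      * assert (~ (S m <= Nat.log2 N)%nat) by (rewrite <- Nat.log2_le_pow2; lia).
        rewrite !Nat.min_r by lia. lra.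
Qed.

Lemma coef_sum N : sum_f_R0 (fun k => coef k N) N = 1 - tailX N.
Proof. rewrite coef_sum_partial, Nat.min_r by apply log2_le_self. reflexivity. Qed.

Lemma tail_one N : tail 1 N = tailX N.
Proof.
  unfold tail. rewrite cdf_succ.
  rewrite (sum_eq _ (fun k => coef k N)) by (intros; rewrite cdf_zero; ring).
  rewrite coef_sum. ring.
Qed.

Lemma tail_succ n N :
  tail (S n) N = tailX N + sum_f_R0 (fun k => coef k N * tail n (N - 2 ^ k)) N.
Proof.
  unfold tail at 1. rewrite cdf_succ.
  replace (sum_f_R0 (fun k => coef k N * tail n (N - 2 ^ k)) N) with
    (sum_f_R0 (fun k => coef k N) N
     + -1 * sum_f_R0 (fun k => coef k N * cdf n (N - 2 ^ k)) N).
  { rewrite coef_sum. ring. }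
  rewrite scal_sum, <- plus_sum. apply sum_eq. intros; unfold tail; ring.
Qed.

Lemma tailX_pos N : 0 < tailX N.
Proof. apply half_pow_pos. Qed.

Lemma tailX_le_1 N : tailX N <= 1.
Proof. apply (half_pow_anti 0); lia. Qed.

Lemma tailX_anti M N : (M <= N)%nat -> tailX N <= tailX M.
Proof. intros HMN. apply half_pow_anti, Nat.log2_le_mono, HMN. Qed.

Lemma tailX_pow2 k : tailX (2 ^ k) = (/2) ^ k.
Proof. unfold tailX. now rewrite Nat.log2_pow2 by lia. Qed.

Lemma tailX_lower N : (1 <= N)%nat -> 1 <= INR N * tailX N.
Proof.
  intros HN. destruct (Nat.log2_spec N ltac:(lia)) as [Hpow _].
  apply le_INR in Hpow. rewrite INR_pow2 in Hpow. unfold tailX.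
  pose proof (half_pow_mul (Nat.log2 N)). pose proof (half_pow_pos (Nat.log2 N)). nra.
Qed.

Lemma tailX_upper N : (INR N + 1) * tailX N <= 2.
Proof.
  destruct (Nat.eq_dec N 0) as [->|HN].
  - unfold tailX. rewrite Nat.log2_nonpos by lia. simpl. lra.
  - destruct (Nat.log2_spec N ltac:(lia)) as [_ H1].
    assert (H2 : (N + 1 <= 2 ^ S (Nat.log2 N))%nat) by lia.
    apply le_INR in H2. rewrite INR_pow2, plus_INR in H2. simpl in H2. unfold tailX.
    pose proof (half_pow_mul (Nat.log2 N)). pose proof (half_pow_pos (Nat.log2 N)). nra.
Qed.

Lemma tailX_le_div N : tailX N <= 2 / (INR N + 1).
Proof.
  pose proof (tailX_upper N). pose proof (pos_INR N).
  apply Rmult_le_reg_l with (INR N + 1); [lra|]. field_simplify; lra.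
Qed.

(** ** The lower bound *)

(** Bonferroni-type lower bound [P{S_n > N} >= n t - n^2 t^2], [t = P{X > N}]:
    by the recursion and monotonicity, [P{S_(n+1) > N} >= t + (1-t) P{S_n > N}]. *)
Lemma tail_lower n N :
  INR n * tailX N - INR n ^ 2 * tailX N ^ 2 <= tail n N.
Proof.
  induction n as [|n IH].
  - rewrite tail_zero. simpl. lra.
  - rewrite tail_succ.
    assert (Hrec : (1 - tailX N) * tail n N <=
                   sum_f_R0 (fun k => coef k N * tail n (N - 2 ^ k)) N).
    { rewrite <- coef_sum, Rmult_comm, scal_sum. apply sum_Rle. intros k _.
      apply Rmult_le_compat_l; [apply coef_bounds|].
      apply tail_anti. lia. }
    pose proof (tailX_pos N). pose proof (tailX_le_1 N).
    pose proof (pos_INR n). rewrite S_INR.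
    set (t := tailX N) in *. set (T := tail n N) in *. set (m := INR n) in *.
    assert ((1 - t) * (m * t - m ^ 2 * t ^ 2) <= (1 - t) * T)
      by (apply Rmult_le_compat_l; lra).
    nra.
Qed.

(** ** The upper bound *)

Definition near_top_coef (a : R) (N k : nat) : R :=
  if Rle_dec (2 ^ k) ((1 - a) * INR N) then 0 else coef k N.

(** Those jumps are absorbed into [P{X > M}] for [M <= (1 - a) N]: only the
    top exponent [K = log2 N] can be that close to [N], and then
    [P{X > M} >= 2^-(K-1) = P{X > N} + 2^-K]. *)
Lemma near_top_absorbed a N M : 0 <= a <= /2 -> (1 <= N)%nat ->
  INR M <= (1 - a) * INR N ->
  tailX N + sum_f_R0 (near_top_coef a N) N <= tailX M.
Proof.
  intros Ha HN HM.
  set (K := Nat.log2 N).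
  destruct (Nat.log2_spec N ltac:(lia)) as [HK1 HK2]. fold K in HK1, HK2.
  apply le_INR in HK1. apply lt_INR in HK2. rewrite INR_pow2 in HK1, HK2.
  assert (HMN : (M <= N)%nat) by (apply INR_le; pose proof (pos_INR N); nra).
  pose proof (tailX_anti M N HMN).
  assert (Hsupp : forall k, near_top_coef a N k <> 0 -> k = K /\ (1 <= K)%nat).
  { intros k Hk. unfold near_top_coef in Hk.
    destruct (Rle_dec (2 ^ k) ((1 - a) * INR N)) as [|Hfar]; [easy|].
    destruct (coef_support k N Hk) as [Hk1 HkK]. fold K in HkK.
    split; [|lia].
    destruct (Nat.eq_dec k K) as [|Hne]; [assumption|].
    exfalso. apply Hfar. pose proof (pow2_le (S k) K ltac:(lia)). simpl in *. nra. }
  destruct (Req_dec (near_top_coef a N K) 0) as [Htop|Htop].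
  - rewrite sum_eq_R0; [lra|]. intros k _.
    destruct (Req_dec (near_top_coef a N k) 0) as [|Hk]; [assumption|].
    destruct (Hsupp k Hk) as [-> _]. exact Htop.
  - rewrite (sum_single _ N K); [| |apply log2_le_self].
    2:{ intros k Hk. destruct (Req_dec (near_top_coef a N k) 0) as [|Hnz];
        [assumption|]. exfalso. apply Hk, (Hsupp k Hnz). }
    destruct (Hsupp K Htop) as [_ HK].
    (* here [M <= (1-a) N < 2^K], so [log2 M <= K - 1] *)
    assert (Hfar : (1 - a) * INR N < 2 ^ K).
    { unfold near_top_coef in Htop. destruct (Rle_dec _ _); [easy|lra]. }
    assert (HlogM : (Nat.log2 M <= K - 1)%nat).
    { destruct (Nat.eq_dec M 0) as [->|HM0]; [rewrite Nat.log2_nonpos; lia|].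
      assert (HMK : (M < 2 ^ K)%nat) by (apply INR_lt; rewrite INR_pow2; lra).
      replace K with (S (K - 1)) in HMK by lia.
      pose proof (Nat.log2_lt_pow2 M (S (K - 1)) ltac:(lia)). lia. }
    assert (HtM : (/2) ^ (K - 1) <= tailX M) by (apply half_pow_anti, HlogM).
    assert (Hnear : near_top_coef a N K <= (/2) ^ K).
    { unfold near_top_coef. destruct (Rle_dec _ _);
        [apply Rlt_le, half_pow_pos | apply coef_bounds]. }
    unfold tailX at 1. fold K.
    replace K with (S (K - 1)) in Hnear |- * by lia. simpl in Hnear |- *. lra.
Qed.

(** Split the recursion for
    [P{S_(n+1) > N}] according to the size of the jump [2^k]:
    - small jumps [2^k <= a N] leave [L = N - 2^k >= (1-a) N], where
      [P{S_n > L} <= alpha]; their total weight is at most [1];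
    - intermediate jumps leave [L >= a N], where [P{S_n > L} <= beta]; their
      total weight is at most [2 / (a N)] (geometric tail);
    - large jumps, with [P{S_n > L} <= 1], are absorbed by [near_top_absorbed]. *)
Lemma tail_succ_upper n N M a alpha beta :
  0 < a <= /2 -> (1 <= N)%nat -> INR M <= (1 - a) * INR N ->
  0 <= alpha -> 0 <= beta ->
  (forall L, (1 - a) * INR N <= INR L -> tail n L <= alpha) ->
  (forall L, a * INR N <= INR L -> tail n L <= beta) ->
  tail (S n) N <= tailX M + alpha + beta * (2 / (a * INR N)).
Proof.
  intros Ha HN HM Halpha Hbeta Hsmall Hmid.
  assert (HNr : 1 <= INR N) by (apply (le_INR 1); exact HN).
  set (Nr := INR N) in *.
  set (small := fun k => if Rle_dec (2 ^ k) (a * Nr) then coef k N else 0).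
  set (mid := fun k => if Rle_dec (2 ^ k) (a * Nr) then 0 else
                       if Rle_dec (2 ^ k) ((1 - a) * Nr) then coef k N else 0).
  assert (Hpoint : forall k, (k <= N)%nat -> coef k N * tail n (N - 2 ^ k) <=
            small k * alpha + mid k * beta + near_top_coef a N k).
  { intros k _. unfold small, mid, near_top_coef. fold Nr.
    destruct (coef_cases k N) as [[_ [Hk Ec]]|[_ ->]].
    2:{ destruct (Rle_dec _ _), (Rle_dec _ _); lra. }
    assert (HL : INR (N - 2 ^ k) = Nr - 2 ^ k) by (rewrite minus_INR, INR_pow2; auto).
    pose proof (tail_le_1 n (N - 2 ^ k)). pose proof (half_pow_pos k).
    rewrite Ec.
    destruct (Rle_dec (2 ^ k) (a * Nr)) as [Hs|Hs],
      (Rle_dec (2 ^ k) ((1 - a) * Nr)) as [Hm|Hm].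
    - assert (tail n (N - 2 ^ k) <= alpha) by (apply Hsmall; lra). nra.
    - nra.
    - assert (tail n (N - 2 ^ k) <= beta) by (apply Hmid; lra). nra.
    - nra. }
  assert (Hsmall_sum : sum_f_R0 small N <= 1).
  { pose proof (coef_sum N). pose proof (tailX_pos N).
    assert (sum_f_R0 small N <= sum_f_R0 (fun k => coef k N) N); [|lra].
    apply sum_Rle. intros k _. unfold small.
    pose proof (coef_bounds k N). destruct (Rle_dec _ _); lra. }
  assert (Hsmall_pos : 0 <= sum_f_R0 small N).
  { apply cond_pos_sum. intros k. unfold small.
    pose proof (coef_bounds k N). destruct (Rle_dec _ _); lra. }
  assert (Hmid_sum : sum_f_R0 mid N <= 2 / (a * Nr)).
  { eapply Rle_trans; [|apply (geometric_tail (a * Nr) N); nra].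
    apply sum_Rle. intros k _. unfold mid. pose proof (coef_bounds k N).
    destruct (Rle_dec _ _), (Rlt_dec _ _); try destruct (Rle_dec _ _); lra. }
  pose proof (near_top_absorbed a N M ltac:(lra) HN HM) as Htop.
  pose proof (sum_Rle _ _ _ Hpoint) as Hsum.
  rewrite !plus_sum, <- !scal_sum in Hsum.
  rewrite tail_succ.
  assert (beta * sum_f_R0 mid N <= beta * (2 / (a * Nr)))
    by (apply Rmult_le_compat_l; assumption).
  nra.
Qed.

Definition tail_upper_bound (n : nat) : Prop :=
  forall eta, 0 < eta <= /2 ->
  exists C, 0 <= C /\ forall N M, (1 <= N)%nat -> INR M <= (1 - eta) * INR N ->
    tail n N <= INR n * tailX M + C / INR N ^ 2.

(** The crude consequence [P{S_n > L} = O(1/L)] (take [eta = 1/2], [M = L/2]). *)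
Lemma tail_upper_crude n : tail_upper_bound n ->
  exists D, 0 <= D /\ forall L, (1 <= L)%nat -> tail n L <= D / INR L.
Proof.
  intros Hub. destruct (Hub (/2)) as [C [HC Hbound]]; [lra|].
  pose proof (pos_INR n).
  exists (4 * INR n + C). split; [lra|].
  intros L HL. assert (HLr : 1 <= INR L) by (apply (le_INR 1); exact HL).
  set (M := floor_nat (INR L / 2)).
  destruct (floor_nat_spec (INR L / 2)) as [HM1 HM2]; [lra|]. fold M in HM1, HM2.
  specialize (Hbound L M HL ltac:(lra)).
  assert (HtM : tailX M <= 4 / INR L).
  { eapply Rle_trans; [apply tailX_le_div|].
    apply Rmult_le_reg_l with (INR L * (INR M + 1)); [nra|].
    field_simplify; nra. }
  assert (HC2 : C / INR L ^ 2 <= C / INR L).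
  { apply Rmult_le_compat_l; [exact HC|]. apply Rinv_le_contravar; nra. }
  assert (INR n * tailX M <= INR n * (4 / INR L)) by (apply Rmult_le_compat_l; lra).
  eapply Rle_trans; [exact Hbound|]. unfold Rdiv in *. nra.
Qed.

(** The upper bound holds for every [n], by induction with [tail_succ_upper]:
    for [a = eta/2] the induction hypothesis at [(a, M)] bounds the tail after
    a small jump, the crude bound the tail after an intermediate jump. *)
Lemma tail_upper_bound_all n : tail_upper_bound n.
Proof.
  induction n as [|n IH].
  - intros eta _. exists 0. split; [lra|]. intros N M _ _.
    rewrite tail_zero. simpl. unfold Rdiv. lra.
  - intros eta Heta. set (a := eta / 2).
    destruct (IH a) as [C [HC HIH]]; [unfold a; lra|].
    destruct (tail_upper_crude n IH) as [D [HD Hcrude]].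
    assert (Ha : 0 < a <= /4) by (unfold a; lra).
    exists (2 * C + 2 * D / a ^ 2). split.
    { pose proof (div_nonneg D (a ^ 2) HD ltac:(nra)). lra. }
    intros N M HN HM.
    assert (HNr : 1 <= INR N) by (apply (le_INR 1); exact HN).
    pose proof (pos_INR n). pose proof (tailX_pos M).
    set (alpha := INR n * tailX M + 2 * C / INR N ^ 2).
    set (beta := D / (a * INR N)).
    pose proof (div_nonneg (2 * C) (INR N ^ 2) ltac:(lra) ltac:(nra)) as HCN.
    eapply Rle_trans; [apply (tail_succ_upper n N M a alpha beta)|].
    + lra.
    + exact HN.
    + unfold a in *. nra.
    + unfold alpha. nra.
    + apply div_nonneg; nra.
    + (* after a small jump: [L >= (1-a) N], so [M <= (1-a) L] and [L^2 >= N^2/2] *)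
      intros L HL.
      assert (HL1 : (1 <= L)%nat) by (apply (INR_lt 0); simpl; nra).
      assert (HML : INR M <= (1 - a) * INR L) by (unfold a in *; nra).
      eapply Rle_trans; [apply (HIH L M HL1 HML)|]. unfold alpha.
      apply Rplus_le_compat_l.
      assert (HLr : 1 <= INR L) by (apply (le_INR 1); exact HL1).
      assert (HL34 : 3 / 4 * INR N <= INR L) by nra.
      assert (HL2 : INR N ^ 2 / 2 <= INR L ^ 2) by nra.
      apply Rmult_le_reg_l with (INR L ^ 2 * INR N ^ 2);
        [apply Rmult_lt_0_compat; apply pow_lt; lra|].
      field_simplify; [nra|lra|lra].
    +
      intros L HL.
      assert (HL1 : (1 <= L)%nat) by (apply (INR_lt 0); simpl; nra).
      eapply Rle_trans; [apply (Hcrude L HL1)|]. unfold beta.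
      apply Rmult_le_compat_l; [exact HD|]. apply Rinv_le_contravar; nra.
    + unfold alpha, beta. rewrite S_INR. apply Req_le. field. lra.
Qed.

(** ** From real to integer thresholds *)

(** [S_n] is integer valued, so [P{S_n > x} = P{S_n > floor x}]. *)
Lemma stp_tail_floor n x : 0 <= x -> stp_tail n x = tail n (floor_nat x).
Proof.
  intros Hx. destruct (floor_nat_spec x Hx) as [Hlo Hhi].
  unfold stp_tail, tail, stp_cdf. f_equal.
  assert (E : Z.to_nat (up x) = S (floor_nat x)).
  { unfold floor_nat. destruct (archimed x) as [A1 A2].
    assert (Hu : (0 < up x)%Z) by (apply lt_0_IZR; lra). lia. }
  rewrite E, tech5.
  destruct (Rle_dec (INR (S (floor_nat x))) x) as [h|h]; [rewrite S_INR in h; lra|].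
  unfold cdf. rewrite Rplus_0_r. apply sum_eq. intros k Hk.
  destruct (Rle_dec (INR k) x) as [|h']; [reflexivity|].
  exfalso. apply h'. apply le_INR in Hk. lra.
Qed.

Lemma leading_digit_gap x delta : 1 <= x -> 0 <= delta ->
  delta <= frac_part (log2 x) ->
  2 ^ Nat.log2 (floor_nat x) <= exp (- (delta * ln 2)) * x.
Proof.
  intros Hx Hd Hfr.
  assert (Hln2 : 0 < ln 2) by (rewrite <- ln_1; apply ln_increasing; lra).
  assert (Hlog : 0 <= log2 x).
  { unfold log2, Rdiv. apply Rmult_le_pos; [|apply Rlt_le, Rinv_0_lt_compat; lra]. destruct Hx as [Hx|<-]; [|rewrite ln_1; lra].
    rewrite <- ln_1. apply Rlt_le, ln_increasing; lra. }
  unfold frac_part in Hfr. destruct (base_Int_part (log2 x)) as [Hj1 Hj2].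
  assert (Hj0 : (0 <= Int_part (log2 x))%Z).
  { assert (IZR (-1) < IZR (Int_part (log2 x))) as Hlt by (simpl; lra).
    apply lt_IZR in Hlt. lia. }
  set (K := Z.to_nat (Int_part (log2 x))).
  assert (HK : IZR (Int_part (log2 x)) = INR K)
    by (unfold K; rewrite INR_IZR_INZ, Z2Nat.id; auto).
  rewrite HK in Hfr, Hj1, Hj2.
  (* in logarithmic scale: [(K + delta) ln 2 <= ln x < (K + 1) ln 2] *)
  assert (Hln : ln x = log2 x * ln 2) by (unfold log2; field; lra).
  assert (Hexp : forall a b, a <= b -> exp a <= exp b).
  { intros a b [Hab|Hab]; [apply Rlt_le, exp_increasing, Hab|subst; lra]. }
  assert (Hpow : forall k, 2 ^ k = exp (INR k * ln 2)).
  { intros k. rewrite <- ln_pow, exp_ln; [reflexivity|apply pow_lt|]; lra. }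
  assert (HKx : 2 ^ K <= exp (- (delta * ln 2)) * x).
  { rewrite Hpow. rewrite <- (exp_ln x) by lra. rewrite <- exp_plus.
    apply Hexp. nra. }
  assert (Hx2 : x < 2 ^ S K).
  { rewrite Hpow, <- (exp_ln x) by lra. apply exp_increasing. rewrite S_INR. nra. }
  assert (Hth : exp (- (delta * ln 2)) <= 1) by (rewrite <- exp_0; apply Hexp; nra).
  replace (Nat.log2 (floor_nat x)) with K; [exact HKx|].
  destruct (floor_nat_spec x ltac:(lra)) as [F1 F2].
  pose proof (pow_lt 2 K ltac:(lra)).
  symmetry. apply Nat.log2_unique; [lia|]. split.
  - enough (2 ^ K < S (floor_nat x))%nat by lia.
    apply INR_lt. rewrite S_INR, INR_pow2. nra.
  - apply INR_lt. rewrite INR_pow2. lra.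
Qed.

(** Where the upper bound holds with [M] having the same leading binary digit
    as [N], the ratio [P{S_n > N} / P{X > N}] is [n + O(1/N)]. *)
Lemma tail_ratio_bound n N C : (1 <= N)%nat -> 0 <= C ->
  tail n N <= INR n * tailX N + C / INR N ^ 2 ->
  Rabs (tail n N / tailX N - INR n) <= 2 * INR n ^ 2 / (INR N + 1) + C / INR N.
Proof.
  intros HN HC Hup.
  pose proof (tail_lower n N) as Hlow.
  pose proof (tailX_pos N). pose proof (tailX_lower N HN). pose proof (tailX_le_div N).
  assert (HNr : 1 <= INR N) by (apply (le_INR 1); exact HN).
  set (t := tailX N) in *. set (T := tail n N) in *.
  assert (Hdiff : T / t - INR n = (T - INR n * t) / t) by (field; lra).
  assert (HC2 : C / INR N ^ 2 / t <= C / INR N).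
  { apply Rmult_le_reg_r with (INR N ^ 2 * t); [nra|].
    field_simplify; [nra|lra..]. }
  assert (Hn2 : INR n ^ 2 * t <= 2 * INR n ^ 2 / (INR N + 1)).
  { replace (2 * INR n ^ 2 / (INR N + 1)) with (INR n ^ 2 * (2 / (INR N + 1)))
      by (field; lra).
    apply Rmult_le_compat_l; [nra|lra]. }
  assert (HCpos : 0 <= C / INR N) by (apply div_nonneg; lra).
  rewrite Hdiff. apply Rabs_le. split.
  - apply Rle_trans with (- (INR n ^ 2 * t)); [nra|].
    apply Rmult_le_reg_r with t; [lra|]. field_simplify; nra.
  - apply Rle_trans with (C / INR N ^ 2 / t); [|nra].
    apply Rmult_le_reg_r with t; [lra|]. field_simplify; nra.
Qed.

(** Lower estimate of [x P{S_n > N}] for [x >= N]: since [N P{X > N} >= 1],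
    it is at least [n - n^2 P{X > N} >= n - 2 n^2 / (N + 1)]. *)
Lemma scaled_tail_lower n N x : (1 <= N)%nat -> INR N <= x ->
  2 * INR n ^ 2 <= INR N + 1 ->
  INR n - 2 * INR n ^ 2 / (INR N + 1) <= x * tail n N.
Proof.
  intros HN Hx Hsmall.
  pose proof (tail_lower n N) as Hlow.
  pose proof (tailX_pos N). pose proof (tailX_lower N HN). pose proof (tailX_le_div N).
  pose proof (pos_INR n). pose proof (pos_INR N).
  set (t := tailX N) in *. set (T := tail n N) in *.
  assert (Hn2 : INR n ^ 2 * t <= 2 * INR n ^ 2 / (INR N + 1)).
  { replace (2 * INR n ^ 2 / (INR N + 1)) with (INR n ^ 2 * (2 / (INR N + 1)))
      by (field; lra).
    apply Rmult_le_compat_l; [nra|lra]. }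
  assert (Hle1 : 2 * INR n ^ 2 / (INR N + 1) <= 1).
  { apply Rmult_le_reg_r with (INR N + 1); [lra|]. field_simplify; lra. }
  (* [n t <= 1], so the lower bound [n t (1 - n t)] is nonnegative *)
  assert (Hnt : INR n * t <= 1).
  { destruct n as [|n']; [simpl; lra|].
    assert (1 <= INR (S n')) by (apply (le_INR 1); lia). nra. }
  assert (x * (INR n * t - INR n ^ 2 * t ^ 2) <= x * T)
    by (apply Rmult_le_compat_l; lra).
  assert (Hxt : 1 <= x * t) by nra.
  assert (Hfac : 0 <= INR n - INR n ^ 2 * t) by nra.
  assert (x * (INR n * t - INR n ^ 2 * t ^ 2) = (x * t) * (INR n - INR n ^ 2 * t))
    by ring.
  nra.
Qed.

(** Upper estimate of [x P{S_n > N}] for [x < N + 1], from the upper bound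
    with [M = floor ((1 - eta) N)], for which [P{X > M} <= 2 / ((1 - eta) N)]. *)
Lemma scaled_tail_upper n eta C N x : 0 < eta <= /2 -> 0 <= C -> (1 <= N)%nat ->
  0 <= x < INR N + 1 ->
  (forall M, INR M <= (1 - eta) * INR N -> tail n N <= INR n * tailX M + C / INR N ^ 2) ->
  x * tail n N <= (INR N + 1) * (2 * INR n / ((1 - eta) * INR N) + C / INR N ^ 2).
Proof.
  intros Heta HC HN Hx Hup.
  assert (HNr : 1 <= INR N) by (apply (le_INR 1); exact HN).
  pose proof (pos_INR n).
  set (M := floor_nat ((1 - eta) * INR N)).
  destruct (floor_nat_spec ((1 - eta) * INR N)) as [HM1 HM2]; [nra|]. fold M in HM1, HM2.
  specialize (Hup M HM1).
  assert (HtM : tailX M <= 2 / ((1 - eta) * INR N)).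
  { eapply Rle_trans; [apply tailX_le_div|].
    apply Rmult_le_reg_l with ((INR M + 1) * ((1 - eta) * INR N));
      [apply Rmult_lt_0_compat; nra|].
    field_simplify; nra. }
  assert (Hbound : tail n N <= 2 * INR n / ((1 - eta) * INR N) + C / INR N ^ 2).
  { eapply Rle_trans; [exact Hup|]. apply Rplus_le_compat_r.
    replace (2 * INR n / ((1 - eta) * INR N)) with (INR n * (2 / ((1 - eta) * INR N)))
      by (field; nra).
    apply Rmult_le_compat_l; lra. }
  assert (Hpos : 0 <= 2 * INR n / ((1 - eta) * INR N) + C / INR N ^ 2).
  { pose proof (div_nonneg (2 * INR n) ((1 - eta) * INR N) ltac:(lra) ltac:(nra)).
    pose proof (div_nonneg C (INR N ^ 2) HC ltac:(nra)). lra. }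
  apply Rle_trans with (x * (2 * INR n / ((1 - eta) * INR N) + C / INR N ^ 2));
    [apply Rmult_le_compat_l; lra | apply Rmult_le_compat_r; lra].
Qed.

(** Just below a power of two, [N = 2^(K+1) - 1] and [P{X > N} = 2^-K]; the
    lower bound gives [N P{S_n > N} >= 2n - 2^-K (n + 2 n^2)]. *)
Lemma scaled_tail_below_pow2 n K :
  2 * INR n - (/2) ^ K * (INR n + 2 * INR n ^ 2) <=
  INR (2 ^ S K - 1) * tail n (2 ^ S K - 1).
Proof.
  set (N := (2 ^ S K - 1)%nat).
  pose proof (Nat.pow_nonzero 2 K ltac:(lia)).
  assert (HNr : INR N = 2 * 2 ^ K - 1).
  { unfold N. rewrite minus_INR by (simpl; lia). rewrite INR_pow2. simpl. lra. }
  assert (HtN : tailX N = (/2) ^ K).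
  { unfold tailX. f_equal. apply Nat.log2_unique; [lia|]. unfold N. simpl. lia. }
  pose proof (tail_lower n N) as Hlow. rewrite HtN in Hlow. rewrite HNr.
  pose proof (half_pow_mul K) as E. pose proof (half_pow_pos K).
  pose proof (pow_R1_Rle 2 K ltac:(lra)).
  set (t := (/2) ^ K) in *. set (b := 2 ^ K) in *.
  assert ((2 * b - 1) * (INR n * t - INR n ^ 2 * t ^ 2) <= (2 * b - 1) * tail n N)
    by (apply Rmult_le_compat_l; lra).
  assert (Hexp : (2 * b - 1) * (INR n * t - INR n ^ 2 * t ^ 2)
                 = 2 * INR n - t * (INR n + 2 * INR n ^ 2) + INR n ^ 2 * t ^ 2).
  { replace ((2 * b - 1) * (INR n * t - INR n ^ 2 * t ^ 2)) with
      (2 * INR n * (t * b) - 2 * INR n ^ 2 * t * (t * b) - INR n * t + INR n ^ 2 * t ^ 2)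
      by ring.
    rewrite E. ring. }
  nra.
Qed.

(** Just above a power of two, [N = 2^(j+K) + 2^K]: the upper bound with
    [M = 2^(j+K) = (1 - 1/(2^j+1)) N] gives [N P{S_n > N} <= n (1 + 2^-j) + C/N]. *)
Lemma scaled_tail_above_pow2 n j : (1 <= j)%nat ->
  exists C, 0 <= C /\ forall K,
    INR (2 ^ (j + K) + 2 ^ K) * tail n (2 ^ (j + K) + 2 ^ K) <=
    INR n * (1 + (/2) ^ j) + C / INR (2 ^ (j + K) + 2 ^ K).
Proof.
  intros Hj.
  pose proof (pow2_le 1 j Hj) as Hj2. simpl in Hj2.
  destruct (tail_upper_bound_all n (/ (2 ^ j + 1))) as [C [HC Hup]].
  { split; [apply Rinv_0_lt_compat; lra|apply Rinv_le_contravar; lra]. }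
  exists C. split; [exact HC|]. intros K.
  set (N := (2 ^ (j + K) + 2 ^ K)%nat).
  pose proof (pow_lt 2 K ltac:(lra)).
  pose proof (half_pow_mul j) as Ej. pose proof (half_pow_mul K) as EK.
  assert (HNr : INR N = 2 ^ j * 2 ^ K + 2 ^ K)
    by (unfold N; rewrite plus_INR, !INR_pow2, pow_add; ring).
  assert (HN : (1 <= N)%nat) by (unfold N; pose proof (Nat.pow_nonzero 2 K); lia).
  assert (HM : INR (2 ^ (j + K)) <= (1 - / (2 ^ j + 1)) * INR N).
  { rewrite HNr, INR_pow2, pow_add. right. field. lra. }
  specialize (Hup N _ HN HM). rewrite tailX_pow2, pow_add in Hup.
  rewrite HNr in Hup |- *.
  set (a := 2 ^ j) in *. set (b := 2 ^ K) in *.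
  set (ha := (/2) ^ j) in *. set (hb := (/2) ^ K) in *.
  assert (HNpos : 0 < a * b + b) by nra.
  apply Rle_trans with ((a * b + b) * (INR n * (ha * hb) + C / (a * b + b) ^ 2));
    [apply Rmult_le_compat_l; lra|].
  replace ((a * b + b) * (INR n * (ha * hb) + C / (a * b + b) ^ 2)) with
    (INR n * (ha * a) * (hb * b) + INR n * ha * (hb * b) + C / (a * b + b))
    by (field; lra).
  rewrite Ej, EK. lra.
Qed.

Lemma tail_ratio_limit n : forall delta : R, 0 < delta ->
  forall eps : R, 0 < eps ->
  exists M : R, forall x : R, M < x -> delta <= frac_part (log2 x) ->
    Rabs (stp_tail n x / stp_tail 1 x - INR n) < eps.
Proof.
  intros delta Hd eps He.
  set (th := exp (- (delta * ln 2))).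
  assert (Hln2 : 0 < ln 2) by (rewrite <- ln_1; apply ln_increasing; lra).
  assert (Hth : 0 < th < 1)
    by (split; [apply exp_pos|rewrite <- exp_0; apply exp_increasing; nra]).
  set (eta := Rmin (/2) ((1 - th) / 2)).
  assert (Heta : 0 < eta <= /2)
    by (split; [apply Rmin_pos; lra|apply Rmin_l]).
  assert (Heta2 : eta <= (1 - th) / 2) by apply Rmin_r.
  destruct (tail_upper_bound_all n eta Heta) as [C [HC Hup]].
  pose proof (pos_INR n).
  pose proof (div_nonneg 2 (1 - th) ltac:(lra) ltac:(lra)).
  pose proof (div_nonneg (2 * INR n ^ 2 + C) eps ltac:(nra) He).
  exists (2 + 2 / (1 - th) + (2 * INR n ^ 2 + C) / eps). intros x Hx Hfr.
  rewrite !stp_tail_floor, tail_one by lra.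
  set (N := floor_nat x). destruct (floor_nat_spec x ltac:(lra)) as [HN1 HN2].
  fold N in HN1, HN2.
  assert (HN : (1 <= N)%nat) by (apply (INR_lt 0); simpl; lra).
  (* [M = 2^K], [K = log2 N], is far enough below [N] *)
  pose proof (leading_digit_gap x delta ltac:(lra) ltac:(lra) Hfr) as Hgap. fold th N in Hgap.
  assert (HM : INR (2 ^ Nat.log2 N) <= (1 - eta) * INR N).
  { rewrite INR_pow2.
    assert (2 / (1 - th) * (1 - th) = 2) by (field; lra).
    assert (2 <= INR N * (1 - th)) by nra. nra. }
  specialize (Hup N _ HN HM). rewrite tailX_pow2 in Hup. fold (tailX N) in Hup.
  eapply Rle_lt_trans; [apply (tail_ratio_bound n N C HN HC Hup)|].
  (* both error terms are at most [(2 n^2 + C) / N < eps] *)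
  assert (Hbig : (2 * INR n ^ 2 + C) / eps < INR N) by lra.
  apply Rle_lt_trans with ((2 * INR n ^ 2 + C) / INR N).
  - apply Rmult_le_reg_r with (INR N * (INR N + 1)); [nra|].
    field_simplify; nra.
  - apply Rmult_lt_reg_r with (INR N); [lra|].
    replace ((2 * INR n ^ 2 + C) / INR N * INR N) with (2 * INR n ^ 2 + C) by (field; lra).
    apply Rmult_lt_compat_l with (r := eps) in Hbig; [|lra].
    replace (eps * ((2 * INR n ^ 2 + C) / eps)) with (2 * INR n ^ 2 + C) in Hbig
      by (field; lra).
    lra.
Qed.

Lemma scaled_tail_liminf_lower n : forall eps : R, 0 < eps ->
  exists M : R, forall x : R, M < x -> INR n - eps < x * stp_tail n x.
Proof.
  intros eps He. pose proof (pos_INR n).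
  pose proof (div_nonneg (2 * INR n ^ 2) eps ltac:(nra) He).
  exists (2 * INR n ^ 2 / eps + 2 * INR n ^ 2 + 1). intros x Hx.
  rewrite stp_tail_floor by nra.
  set (N := floor_nat x). destruct (floor_nat_spec x ltac:(nra)) as [HN1 HN2].
  fold N in HN1, HN2.
  assert (HN : (1 <= N)%nat) by (apply (INR_lt 0); simpl; nra).
  pose proof (pos_INR N).
  eapply Rlt_le_trans; [|apply (scaled_tail_lower n N x HN HN1); lra].
  enough (2 * INR n ^ 2 / (INR N + 1) < eps) by lra.
  apply Rmult_lt_reg_r with (INR N + 1); [lra|].
  replace (2 * INR n ^ 2 / (INR N + 1) * (INR N + 1)) with (2 * INR n ^ 2) by (field; lra).
  assert (2 * INR n ^ 2 / eps * eps = 2 * INR n ^ 2) by (field; lra).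
  nra.
Qed.

(** [liminf x P{S_n > x} <= n], along [x = 2^(j+K) + 2^K] with [j], then [K],
    large. *)
Lemma scaled_tail_liminf_attained n : forall eps M : R, 0 < eps ->
  exists x : R, M < x /\ x * stp_tail n x < INR n + eps.
Proof.
  intros eps M He. pose proof (pos_INR n).
  destruct (exists_pow2_above (2 * INR n / eps)) as [j [Hj Hj2]].
  destruct (scaled_tail_above_pow2 n j Hj) as [C [HC Hest]].
  destruct (exists_pow2_above (Rabs M + 2 * C / eps)) as [K [_ HK]].
  set (N := (2 ^ (j + K) + 2 ^ K)%nat).
  assert (HNr : 2 ^ K <= INR N)
    by (unfold N; rewrite plus_INR, !INR_pow2; pose proof (pow_lt 2 (j + K)); lra).
  pose proof (Rle_abs M). pose proof (div_nonneg (2 * C) eps ltac:(lra) He).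
  pose proof (pow_lt 2 K ltac:(lra)).
  exists (INR N). split; [lra|].
  rewrite stp_tail_floor, floor_nat_INR by apply pos_INR.
  eapply Rle_lt_trans; [apply Hest|]. fold N.
  assert (Hnj : INR n * (/2) ^ j < eps / 2).
  { pose proof (half_pow_mul j) as Ej.
    assert (2 * INR n / eps * eps = 2 * INR n) by (field; lra).
    apply Rmult_lt_reg_r with (2 ^ j); [apply pow_lt; lra|].
    rewrite Rmult_assoc, Ej, Rmult_1_r. nra. }
  assert (HCN : C / INR N < eps / 2).
  { assert (2 * C / eps * eps = 2 * C) by (field; lra).
    assert (HCe : 2 * C / eps < INR N) by (pose proof (Rabs_pos M); lra).
    apply Rmult_lt_reg_r with (INR N); [lra|].
    replace (C / INR N * INR N) with C by (field; lra). nra. }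
  lra.
Qed.

Lemma scaled_tail_limsup_upper n : forall eps : R, 0 < eps ->
  exists M : R, forall x : R, M < x -> x * stp_tail n x < 2 * INR n + eps.
Proof.
  intros eps He. pose proof (pos_INR n).
  set (eta := Rmin (/2) (eps / (8 * INR n + eps))).
  assert (Hq : 0 < eps / (8 * INR n + eps)) by (apply Rdiv_lt_0_compat; lra).
  assert (Heta : 0 < eta <= /2) by (split; [apply Rmin_pos; lra|apply Rmin_l]).
  assert (Heta2 : eta <= eps / (8 * INR n + eps)) by apply Rmin_r.
  destruct (tail_upper_bound_all n eta Heta) as [C [HC Hup]].
  set (G := 2 * INR n + eps + 2 * C).
  pose proof (div_nonneg (4 * G) eps ltac:(unfold G; lra) He).
  exists (4 * G / eps + 2). intros x Hx.
  rewrite stp_tail_floor by lra.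
  set (N := floor_nat x). destruct (floor_nat_spec x ltac:(lra)) as [HN1 HN2].
  fold N in HN1, HN2.
  assert (HN : (1 <= N)%nat) by (apply (INR_lt 0); simpl; lra).
  eapply Rle_lt_trans;
    [apply (scaled_tail_upper n eta C N x Heta HC HN ltac:(lra) (fun M => Hup N M HN))|].
  set (Nr := INR N) in *.
  (* [2n / (1 - eta) <= 2n + eps/4] and the remaining terms are [O(1/N)] *)
  assert (Heta3 : 2 * INR n / (1 - eta) <= 2 * INR n + eps / 4).
  { apply Rmult_le_reg_r with (1 - eta); [lra|].
    replace (2 * INR n / (1 - eta) * (1 - eta)) with (2 * INR n) by (field; lra).
    assert (eta * (8 * INR n + eps) <= eps).
    { replace eps with (eps / (8 * INR n + eps) * (8 * INR n + eps)) at 2 by (field; lra).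
      apply Rmult_le_compat_r; lra. }
    nra. }
  assert (HNG : 4 * G < eps * Nr).
  { assert (4 * G / eps * eps = 4 * G) by (field; lra). nra. }
  replace ((Nr + 1) * (2 * INR n / ((1 - eta) * Nr) + C / Nr ^ 2)) with
    (2 * INR n / (1 - eta) + (2 * INR n / (1 - eta) + C) / Nr + C / Nr ^ 2)
    by (field; split; lra).
  assert (HC2 : C / Nr ^ 2 <= C / Nr).
  { apply Rmult_le_compat_l; [exact HC|]. apply Rinv_le_contravar; nra. }
  assert (HG : (2 * INR n / (1 - eta) + C) / Nr + C / Nr < eps / 2).
  { apply Rmult_lt_reg_r with Nr; [lra|].
    replace (((2 * INR n / (1 - eta) + C) / Nr + C / Nr) * Nr)
      with (2 * INR n / (1 - eta) + 2 * C) by (field; lra).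
    unfold G in HNG. nra. }
  lra.
Qed.

(** [limsup x P{S_n > x} >= 2n], along [x = 2^(K+1) - 1]. *)
Lemma scaled_tail_limsup_attained n : forall eps M : R, 0 < eps ->
  exists x : R, M < x /\ 2 * INR n - eps < x * stp_tail n x.
Proof.
  intros eps M He. pose proof (pos_INR n).
  set (G := INR n + 2 * INR n ^ 2).
  pose proof (div_nonneg G eps ltac:(unfold G; nra) He).
  destruct (exists_pow2_above (Rabs M + G / eps + 1)) as [K [_ HK]].
  pose proof (Rle_abs M).
  set (N := (2 ^ S K - 1)%nat).
  assert (HNr : INR N = 2 * 2 ^ K - 1).
  { unfold N. pose proof (Nat.pow_nonzero 2 K ltac:(lia)).
    rewrite minus_INR by (simpl; lia). rewrite INR_pow2. simpl. lra. }
  pose proof (pow_lt 2 K ltac:(lra)).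
  exists (INR N). split; [rewrite HNr; lra|].
  rewrite stp_tail_floor, floor_nat_INR by apply pos_INR.
  eapply Rlt_le_trans; [|apply scaled_tail_below_pow2]. fold G.
  enough ((/2) ^ K * G < eps) by lra.
  pose proof (half_pow_mul K) as EK.
  assert (G / eps * eps = G) by (field; lra).
  assert (HGe : G / eps < 2 ^ K) by (pose proof (Rabs_pos M); lra).
  apply Rmult_lt_reg_r with (2 ^ K); [lra|].
  replace ((/2) ^ K * G * 2 ^ K) with (G * ((/2) ^ K * 2 ^ K)) by ring.
  rewrite EK. nra.
Qed.

Theorem mainTheorem11 :
  forall n : nat, (1 <= n)%nat ->
  (forall delta : R, 0 < delta ->
     forall eps : R, 0 < eps ->
     exists M : R, forall x : R, M < x -> delta <= frac_part (log2 x) ->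
       Rabs (stp_tail n x / stp_tail 1 x - INR n) < eps)
  /\
  (* liminf_{x->oo} x P{S_n > x} = n *)
  ((forall eps : R, 0 < eps ->
      exists M : R, forall x : R, M < x -> INR n - eps < x * stp_tail n x)
   /\ (forall eps M : R, 0 < eps ->
      exists x : R, M < x /\ x * stp_tail n x < INR n + eps))
  /\
  INR n < 2 * INR n
  /\
  (* limsup_{x->oo} x P{S_n > x} = 2n *)
  ((forall eps : R, 0 < eps ->
      exists M : R, forall x : R, M < x -> x * stp_tail n x < 2 * INR n + eps)
   /\ (forall eps M : R, 0 < eps ->
      exists x : R, M < x /\ 2 * INR n - eps < x * stp_tail n x)).
Proof.
  intros n Hn.
  assert (Hpos : 0 < INR n) by (apply (lt_INR 0); lia).
  split; [apply tail_ratio_limit|].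
  split; [split; [apply scaled_tail_liminf_lower|apply scaled_tail_liminf_attained]|].
  split; [lra|].
  split; [apply scaled_tail_limsup_upper|apply scaled_tail_limsup_attained].
Qed.
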